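(* Let $k\ge3$, and let $\nu_0$ be an initial distribution of the $S_k$ shuffle on $\mathcal S_N$ such that $\sigma\mapsto\nu_0(\sigma)/\mu_N(\sigma)$ is increasing with respect to $\succeq$. Let $\mathcal C$ be a censoring scheme and let $\nu^{\mathcal C}_t$ be the law at time $t$ of the censored $S_k$ shuffle (with respect to $\mathcal C$) started from $\nu_0$. Then for every $t\ge0$ the function $\sigma\mapsto\nu^{\mathcal C}_t(\sigma)/\mu_N(\sigma)$ is increasing with respect to $\succeq$, and the censoring inequality holds: for every $t\ge0$ and every fixed realization of the update times, the law at time $t$ of the censored dynamics stochastically dominates (with respect to $\succeq$) the law at time $t$ of the uncensored $S_k$ shuffle, both started from $\nu_0$ and driven by these same update times.
   Context: $\mathcal S_N$ is the symmetric group on $[N]$, $\sigma(z)$ the label of the card at position $z$; $\mu_N$ the uniform measure. The $S_k$ shuffle: each block $\{i,\dots,i+k-1\}$, $1\le i\le N-k+1$, has an independent rate-1 Poisson clock (the update times); when it rings the cards in the block are rearranged by a uniform element of $\mathcal S_k$. Height function $h_\sigma(x,y)=\sum_{z=1}^x\mathbf 1\{\sigma(z)\le y\}-xy/N$; partial order: $\sigma\succeq\sigma'$ iff $h_\sigma(x,y)\ge h_{\sigma'}(x,y)$ for all $x,y\in[N]$. A function $f$ is increasing if $\sigma\succeq\sigma'$ implies $f(\sigma)\ge f(\sigma')$; a measure $\mu$ stochastically dominates $\nu$ if $\mu(A)\ge\nu(A)$ for every set $A$ that is increasing (upward closed) for $\succeq$. A censoring scheme is a càdlàg map $\mathcal C:[0,\infty)\to\mathcal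 P(E)$, $E=\{\{x,x+1\}:x\in[N-1]\}$. Censored dynamics: when at time $t$ the clock of an interval $\mathcal I=[i,j]$ rings, if no edge $\{x,x+1\}\in\mathcal C_t$ has both endpoints in $\mathcal I$, the cards in $\mathcal I$ are uniformly reshuffled as usual; otherwise $\mathcal I$ is split into the maximal subintervals $[i_m,i_{m+1}-1]$ separated by the censored edges $\{i_m-1,i_m\}\in\mathcal C_t$, and the cards in each subinterval are independently uniformly reshuffled within that subinterval. *)

From mathcomp Require Import all_boot all_order all_algebra all_fingroup.
Set Implicit Arguments. Unset Strict Implicit. Unset Printing Implicit Defensive.
Import Order.TTheory GRing.Theory Num.Theory.
Local Open Scope ring_scope.

(* Conventions (0-based): positions and labels are 'I_N; a permutation
   s : {perm 'I_N} maps a position z to the label s z of the card there.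
   Paper position x (1..N) is 0-based x-1, label y is 0-based y-1. *)

Definition height (N : nat) (s : {perm 'I_N}) (x y : nat) : rat :=
  (#|[set z : 'I_N | (z < x)%N && (s z < y)%N]|)%:R - (x * y)%:R / N%:R.

Definition perm_ge (N : nat) (s s' : {perm 'I_N}) : Prop :=
  forall x y : nat, (1 <= x <= N)%N -> (1 <= y <= N)%N ->
    height s' x y <= height s x y.

Definition increasing (R : realFieldType) (N : nat) (f : {perm 'I_N} -> R) : Prop :=
  forall s s', perm_ge s s' -> f s' <= f s.

Definition upward_closed (N : nat) (A : {set {perm 'I_N}}) : Prop :=
  forall s s', s \in A -> perm_ge s' s -> s' \in A.

Definition stoch_dom (R : realFieldType) (N : nat) (nu nu' : {perm 'I_N} -> R) : Prop :=
  forall A : {set {perm 'I_N}}, upward_closed A ->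
    \sum_(s in A) nu' s <= \sum_(s in A) nu s.

Definition muN (R : realFieldType) (N : nat) (s : {perm 'I_N}) : R := 1 / (N`!)%:R.

Definition in_block (N k i : nat) (z : 'I_N) : bool := (i <= z < i + k)%N.

(* Edge e : 'I_(N.-1) is the edge {e, e+1} (0-based).  z and w lie in the same
   maximal subinterval of block i determined by the censored edges E. *)
Definition same_piece (N k i : nat) (E : {set 'I_(N.-1)}) (z w : 'I_N) : bool :=
  [&& in_block k i z, in_block k i w &
      [forall e : 'I_(N.-1), (e \in E) ==> ~~ ((minn z w <= e) && (e < maxn z w))%N]].

Definition allowed (N k i : nat) (E : {set 'I_(N.-1)}) : {set {perm 'I_N}} :=
  [set t : {perm 'I_N} | [forall z : 'I_N,
     if in_block k i z then same_piece k i E (t z) z else t z == z]].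

(* One (censored) update of block i with censored edge set E: the cards are
   rearranged by a uniform element t of [allowed k i E]; the new configuration is
   z |-> s (t z), i.e. (t * s)%g. *)
Definition step (R : realFieldType) (N k i : nat) (E : {set 'I_(N.-1)})
    (nu : {perm 'I_N} -> R) : {perm 'I_N} -> R :=
  fun s' => \sum_(t in allowed k i E) \sum_(s | (t * s)%g == s') nu s / (#|allowed k i E|)%:R.

(* law at time t given the realization [ups] of the update times up to t
   (list of (ring time, ringing block), in increasing time order) and the
   censoring scheme C. *)
Definition law (R : realFieldType) (N k : nat) (C : R -> {set 'I_(N.-1)})
    (ups : seq (R * 'I_(N.+1 - k))) (nu0 : {perm 'I_N} -> R) : {perm 'I_N} -> R :=
  foldl (fun nu (p : R * 'I_(N.+1 - k)) => step k p.2 (C p.1) nu) nu0 ups.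

Definition no_censoring (R : realFieldType) (N : nat) : R -> {set 'I_(N.-1)} :=
  fun _ => set0.

(* cadlag on [0, oo) for a function with values in a finite (discrete) set *)
Definition cadlag (R : realFieldType) (N : nat) (C : R -> {set 'I_(N.-1)}) : Prop :=
  forall s : R, 0 <= s ->
    (exists2 d : R, 0 < d & forall r, s <= r < s + d -> C r = C s) /\
    (0 < s -> exists E, exists2 d : R, 0 < d & forall r, s - d < r < s -> C r = E).

Definition realization (R : realFieldType) (N k : nat) (t : R)
    (ups : seq (R * 'I_(N.+1 - k))) : Prop :=
  sorted (fun p q : R * 'I_(N.+1 - k) => p.1 < q.1) ups /\
  all (fun p : R * 'I_(N.+1 - k) => (0 <= p.1) && (p.1 <= t)) ups.

From mathcomp Require Import all_boot all_order all_algebra all_fingroup.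
From mathcomp Require Import zify ring.
Import Order.TTheory GRing.Theory Num.Theory.
Set Implicit Arguments. Unset Strict Implicit. Unset Printing Implicit Defensive.

(* One (censored) update of block i with censored edges E moves the law nu to
   its orbit average  A_H nu (s) = |H|^-1 sum_(t in H) nu (t s)  over the group
   H = [allowed k i E] of admissible rearrangements; censoring shrinks H to a
   subgroup of the uncensored group [allowed k i set0].  Since mu_N is uniform,
   nu / mu_N is increasing iff nu is, and domination is tested against
   indicators of upward closed sets, i.e. against increasing functions.  The
   theorem follows by induction along the update sequence from two facts valid
   for every block i, length k and edge set E:
   (1) A_H maps increasing functions to increasing functions  [avg_monotone];
   (2) sum_s A_H u s * w s <= sum_s u s * w s for increasing u, w  [avg_censoring].
   Both are proved by induction on the block length, peeling off its last
   position p: the group for length len.+1 is the union of the cosets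
   H_len * (q p), q ranging over the piece of p.  For (1) the cosets are
   compared after sorting the piece; (2) is Chebyshev's sum inequality over
   the cosets.  Given (1) and (2), if nu^C and nu are increasing and nu^C
   dominates nu, then so do their updates, because averaging over the smaller
   censored group first does not change the uncensored average. *)

Section PositionCounts.
Variable N : nat.
Implicit Types s t x : {perm 'I_N}.

Definition count_in s (a b Y : nat) : nat := \sum_(z : 'I_N | a <= z < b) (s z < Y).

Definition count_low s (X Y : nat) : nat := count_in s 0 X Y.

Definition dominates s s' : Prop := forall X Y, count_low s' X Y <= count_low s X Y.

Definition ascending x (a b : nat) : Prop :=
  forall z z' : 'I_N, a <= z -> z < z' -> z' < b -> x z < x z'.

Lemma count_in_cat s a b d Y : a <= b <= d ->
  count_in s a b Y + count_in s b d Y = count_in s a d Y.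
Proof.
move=> /andP[ab bd]; rewrite /count_in.
rewrite (bigID (fun z : 'I_N => z < b) (fun z : 'I_N => a <= z < d)) /=.
by congr (_ + _); apply: eq_bigl => z /=; lia.
Qed.

Lemma card_window a b : b <= N -> \sum_(z : 'I_N | a <= z < b) 1 = b - a.
Proof.
move=> bN; have count_iota n : count (fun z => a <= z < b) (iota 0 n) = minn b n - a.
  elim: n => [|n IH]; first by rewrite /=; lia.
  by rewrite -addn1 iotaD count_cat IH /= add0n addn0; lia.
rewrite sum1_card cardE size_filter -(count_map val (fun z => a <= z < b)) /=.
by rewrite -enumT val_enum_ord count_iota; lia.
Qed.

Lemma count_in_le s a b Y : b <= N -> count_in s a b Y <= b - a.
Proof.
by move=> bN; rewrite -(card_window a bN); apply: leq_sum => z _; case: (_ < _).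
Qed.

Lemma count_in_full s a b Y : b <= N ->
  (forall z : 'I_N, a <= z < b -> s z < Y) -> count_in s a b Y = b - a.
Proof. by move=> bN low; rewrite -(card_window a bN); apply: eq_bigr => z /low ->. Qed.

Lemma count_in_empty s a b Y :
  (forall z : 'I_N, a <= z < b -> Y <= s z) -> count_in s a b Y = 0.
Proof.
by move=> high; rewrite /count_in big1 // => z /high; rewrite leqNgt => /negbTE ->.
Qed.

Lemma count_low_stable t s X Y :
  (forall z, (t z < X) = (z < X)) -> count_low (t * s)%g X Y = count_low s X Y.
Proof.
move=> tX; rewrite /count_low /count_in (reindex_inj (@perm_inj _ t^-1)) /=.
apply: eq_big => z; first by rewrite -tX permKV.
by move=> _; rewrite permM permKV.
Qed.

Lemma dominates_swap x (z w : 'I_N) :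
  z < w -> x w < x z -> dominates (tperm z w * x)%g x.
Proof.
move=> zw xwz X Y.
have [Xz|zX] := leqP X z.
  by rewrite count_low_stable // => u; case: tpermP => [->|->|] //; lia.
have [wX|Xw] := ltnP w X.
  by rewrite count_low_stable // => u; case: tpermP => [->|->|] //; lia.
rewrite /count_low /count_in (bigD1 z) /=; last by lia.
rewrite [X in _ <= X](bigD1 z) /=; last by lia.
rewrite permM tpermL leq_add //; last first.
  rewrite leq_eqVlt; apply/orP; left; apply/eqP; apply: eq_bigr => u /andP[uX uz].
  rewrite permM tpermD //; first by rewrite eq_sym.
  by apply/eqP => wu; move: uX; rewrite -wu; lia.
by case: (ltnP (x z) Y) => // xzY; rewrite (_ : x w < Y = true) //; lia.
Qed.

(* On an ascending window the labels below Y form an initial segment. *)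
Lemma ascending_count x a b X Y : b <= N -> a <= X <= b -> ascending x a b ->
  minn (X - a) (count_in x a b Y) <= count_in x a X Y.
Proof.
move=> bN /andP[aX Xb] asc.
case: (boolP [exists z : 'I_N, (X <= z < b) && (x z < Y)]).
  case/existsP => z /andP[/andP[Xz zb] xzY].
  rewrite (@count_in_full _ a X) ?geq_minl //; first by lia.
  by move=> z' /andP[az' z'X]; apply: ltn_trans xzY; apply: asc => //; lia.
rewrite negb_exists => /forallP none.
rewrite -(@count_in_cat _ a X b) ?aX ?Xb // (@count_in_empty _ X b) ?addn0 ?geq_minr //.
by move=> z zXb; move: (none z); rewrite zXb /= -leqNgt.
Qed.

Lemma dominates_of_ascending x x' a b : a <= b <= N -> ascending x a b ->
  (forall X Y, (X <= a) || (b <= X) -> count_low x' X Y <= count_low x X Y) ->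
  dominates x x'.
Proof.
move=> /andP[ab bN] asc outside X Y.
case: (boolP ((X <= a) || (b <= X))) => [|inside]; first exact: outside.
have aXb : a <= X <= b by lia.
have atA : count_low x' a Y <= count_low x a Y by apply: outside; rewrite leqnn.
have atB : count_low x' b Y <= count_low x b Y by apply: outside; rewrite leqnn orbT.
move: atA atB; rewrite /count_low.
have := ascending_count Y bN aXb asc.
have := @count_in_le x' a X Y (leq_trans (proj2 (andP aXb)) bN).
have := @count_in_cat x 0 a X Y; have := @count_in_cat x' 0 a X Y.
have := @count_in_cat x 0 a b Y; have := @count_in_cat x' 0 a b Y.
have := @count_in_cat x' a X b Y.
(* both ends of the window agree with x', and inside x has its low labels
   first: [a, X) is either full or holds all low labels of [a, b) *)
have a0X : 0 <= a <= X by lia. have a0b : 0 <= a <= b by lia.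
move=> /(_ aXb) + /(_ a0b) + /(_ a0b) + /(_ a0X) + /(_ a0X); lia.
Qed.

Lemma count_low_card s X Y :
  #|[set z : 'I_N | (z < X) && (s z < Y)]| = count_low s X Y.
Proof.
rewrite /count_low /count_in -sum1_card big_mkcond [RHS]big_mkcond /=.
by apply: eq_bigr => z _; rewrite inE; case: (z < X); case: (s z < Y).
Qed.

Lemma count_low_clamp s X Y : count_low s X Y = count_low s (minn X N) (minn Y N).
Proof.
rewrite /count_low /count_in; apply: eq_big => z; first by have := ltn_ord z; lia.
by move=> _; have := ltn_ord (s z); lia.
Qed.

Lemma perm_geE s s' : perm_ge s s' <-> dominates s s'.
Proof.
rewrite /perm_ge /height; split => [ge X Y|dom x y _ _].
  rewrite (count_low_clamp s) (count_low_clamp s').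
  case: (posnP (minn X N)) => [->|X0]; first by rewrite /count_low /count_in big_pred0.
  case: (posnP (minn Y N)) => [->|Y0]; first by rewrite /count_low /count_in big1.
  have := ge (minn X N) (minn Y N).
  rewrite !count_low_card lerD2r ler_nat; apply; rewrite geq_minr andbT //.
by rewrite !count_low_card lerD2r ler_nat.
Qed.

End PositionCounts.

Section UpdateGroups.
Variable N : nat.
Implicit Types (s t x : {perm 'I_N}) (E : {set 'I_(N.-1)}).

Lemma same_piece_refl k i E (z : 'I_N) : in_block k i z -> same_piece k i E z z.
Proof. by move=> zi; rewrite /same_piece zi /=; apply/forallP => e; apply/implyP; lia. Qed.

Lemma same_piece_sym k i E (z w : 'I_N) : same_piece k i E z w = same_piece k i E w z.
Proof. by rewrite /same_piece minnC maxnC andbCA. Qed.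

Lemma same_piece_trans k i E (z w v : 'I_N) :
  same_piece k i E z w -> same_piece k i E w v -> same_piece k i E z v.
Proof.
rewrite /same_piece => /and3P[zi wi /forallP zw] /and3P[_ vi /forallP wv].
rewrite zi vi /=; apply/forallP => e; apply/implyP => eE.
by move: (zw e) (wv e); rewrite eE /=; lia.
Qed.

Lemma same_piece_block k i E (z w : 'I_N) :
  same_piece k i E z w -> in_block k i z && in_block k i w.
Proof. by case/and3P => -> ->. Qed.

Lemma allowedP k i E t :
  reflect (forall z, if in_block k i z then same_piece k i E (t z) z else t z == z)
          (t \in allowed k i E).
Proof. by rewrite inE; apply: forallP. Qed.

Lemma allowed_group_set k i E : group_set (allowed k i E).
Proof.
apply/group_setP; split.
  by apply/allowedP => z; case: ifP => zi; rewrite perm1 //; apply: same_piece_refl.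
move=> t1 t2 /allowedP t1P /allowedP t2P; apply/allowedP => z; rewrite permM.
move: (t1P z); case: ifP => zi.
  move=> t1z; have := t2P (t1 z); have /andP[-> _] := same_piece_block t1z.
  by move/same_piece_trans; apply.
by move/eqP => ->; move: (t2P z); rewrite zi.
Qed.

Canonical allowed_group k i E : {group {perm 'I_N}} := Group (allowed_group_set k i E).

(* Censoring can only split pieces: its group lies in the uncensored one. *)
Lemma allowed_uncensored k i E : allowed k i E \subset allowed k i set0.
Proof.
apply/subsetP => t /allowedP tP; apply/allowedP => z; move: (tP z); case: ifP => // _.
by case/and3P => zi wi _; rewrite /same_piece zi wi; apply/forallP => e; rewrite inE.
Qed.

Lemma tperm_allowed k i E (q w : 'I_N) : same_piece k i E q w -> tperm q w \in allowed k i E.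
Proof.
move=> qw; have /andP[qi wi] := same_piece_block qw.
apply/allowedP => z; case: tpermP => [->|->|/eqP zq /eqP zw].
- by rewrite qi same_piece_sym.
- by rewrite wi.
- by case: ifP => // zi; apply: same_piece_refl.
Qed.

Lemma allowed0 i E t : t \in allowed 0 i E -> t = 1%g.
Proof.
move/allowedP => tP; apply/permP => z; move: (tP z); rewrite perm1.
by rewrite /in_block (_ : (i <= z < i + 0) = false) /=; [move/eqP|lia].
Qed.

(* [allowed (b - a) a set0] is the symmetric group of the window [a, b); it
   lies in [allowed k i E] when the window lies in a single piece. *)
Lemma window_sub k i E a b :
  (forall z w : 'I_N, a <= z < b -> a <= w < b -> same_piece k i E z w) ->
  allowed (b - a) a set0 \subset allowed k i E.
Proof.
move=> piece; apply/subsetP => t /allowedP tP; apply/allowedP => z; move: (tP z).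
case: ifP => zab; rewrite /in_block in zab.
  case/same_piece_block/andP => tzab _; rewrite /in_block in tzab.
  have /andP[-> _] := same_piece_block (piece z z ltac:(lia) ltac:(lia)).
  by apply: piece; lia.
by move/eqP => ->; case: ifP => // zi; apply: same_piece_refl.
Qed.

Lemma window_count_low a b t s X Y : t \in allowed (b - a) a set0 ->
  (X <= a) || (b <= X) -> count_low (t * s)%g X Y = count_low s X Y.
Proof.
move=> /allowedP tP Xab; apply: count_low_stable => z; move: (tP z).
case: ifP => zab; last by move/eqP ->.
by case/same_piece_block/andP => tzab _; move: zab tzab; rewrite /in_block; lia.
Qed.

Lemma same_piece_succ len i E (z w : 'I_N) : z < i + len -> w < i + len ->
  same_piece len.+1 i E z w = same_piece len i E z w.
Proof.
move=> zp wp; rewrite /same_piece /in_block.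
have -> : (i <= z < i + len.+1) = (i <= z < i + len) by lia.
by have -> : (i <= w < i + len.+1) = (i <= w < i + len) by lia.
Qed.

Lemma allowed_overflow len i E : N <= i + len -> allowed len.+1 i E = allowed len i E.
Proof.
move=> Nlen; apply/setP => t; rewrite !inE; apply: eq_forallb => z.
have zN := ltn_ord z.
rewrite (_ : in_block len.+1 i z = in_block len i z); last by rewrite /in_block; lia.
by case: ifP => // _; rewrite same_piece_succ //; [have := ltn_ord (t z); lia | lia].
Qed.

Lemma allowed_succ len i E : allowed len i E \subset allowed len.+1 i E.
Proof.
apply/subsetP => t /allowedP tP; apply/allowedP => z; move: (tP z).
case: (boolP (in_block len i z)) => zi.
  move=> tzz; have /andP[tzi _] := same_piece_block tzz.
  rewrite (_ : in_block len.+1 i z); last by move: zi; rewrite /in_block; lia.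
  by move: zi tzi tzz; rewrite /in_block => zi tzi; rewrite same_piece_succ //; lia.
by move/eqP => ->; case: ifP => // zi'; apply: same_piece_refl.
Qed.

Section LastPosition.
Variables (len i : nat) (E : {set 'I_(N.-1)}) (p : 'I_N).
Hypothesis p_last : nat_of_ord p = i + len.

Lemma allowed_fixes_last t : t \in allowed len i E -> t p = p.
Proof.
move/allowedP/(_ p); rewrite /in_block p_last.
by rewrite (_ : (i <= i + len < i + len) = false) ?ltnn ?andbF // => /eqP.
Qed.

Lemma allowed_of_fixed t : t \in allowed len.+1 i E -> t p = p -> t \in allowed len i E.
Proof.
move=> /allowedP tP tp; apply/allowedP => z; move: (tP z).
case: (boolP (in_block len i z)) => zi.
  rewrite (_ : in_block len.+1 i z); last by move: zi; rewrite /in_block; lia.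
  move=> tzz; have /andP[tzi _] := same_piece_block tzz.
  have tzp : t z != p by rewrite -{1}tp (inj_eq perm_inj); apply/eqP => zp;
    move: zi; rewrite zp /in_block p_last; lia.
  have tzp' : nat_of_ord (t z) != i + len by rewrite -p_last.
  by move: zi tzi tzp' tzz; rewrite /in_block => zi tzi tzp'; rewrite same_piece_succ //; lia.
case: (eqVneq z p) => [->|zp]; first by rewrite tp.
case: ifP => // zi'; have zp' : nat_of_ord z != i + len by rewrite -p_last.
by move: zi zi' zp'; rewrite /in_block; lia.
Qed.

Lemma piece_of_last : exists c : nat, forall q : 'I_N, same_piece len.+1 i E q p = (c <= q <= p).
Proof.
have pp : same_piece len.+1 i E p p by apply: same_piece_refl; rewrite /in_block p_last; lia.
have [c cp cmin] :=
  @arg_minnP _ p (fun q => same_piece len.+1 i E q p) (fun q => nat_of_ord q) pp.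
exists c => q; apply/idP/idP.
  move=> qp; rewrite cmin //=; case/and3P: qp => qi _ _; move: qi; rewrite /in_block; lia.
move=> /andP[cq qp]; case/and3P: cp => ci _ /forallP noedge.
apply/and3P; split; [move: ci; rewrite /in_block; lia | rewrite /in_block; lia |].
by apply/forallP => e; apply/implyP => eE; move: (noedge e); rewrite eE /=; lia.
Qed.

End LastPosition.

Lemma tperm_count_low (q p : 'I_N) x X Y : (q < X) = (p < X) ->
  count_low (tperm q p * x)%g X Y = count_low x X Y.
Proof. by move=> qpX; apply: count_low_stable => z; case: tpermP => [->|->|]. Qed.

Lemma tperm_count_last (q p : 'I_N) x Y : q <= p ->
  count_low (tperm q p * x)%g p Y + (x q < Y) = count_low x p.+1 Y.
Proof.
move=> qp; rewrite /count_low /count_in [RHS](bigD1 q) /=; last by lia.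
rewrite addnC; congr (_ + _).
rewrite (reindex_inj (@perm_inj _ (tperm q p))) /=.
apply: eq_big => [z|z _]; last by rewrite permM tpermK.
case: tpermP => [->|->|zq zp]; rewrite -(inj_eq val_inj) /=; first by rewrite ltnn eqxx andbF.
  by lia.
have zq' : (z : nat) <> q by move=> e; apply: zq; apply: val_inj.
have zp' : (z : nat) <> p by move=> e; apply: zp; apply: val_inj.
lia.
Qed.

End UpdateGroups.

Section SortingWindows.
Variable N : nat.
Implicit Types (s t x : {perm 'I_N}).

(* [position_weight x] = sum_z z * x z increases when a descent between
   adjacent positions is swapped, so its maximisers are sorted. *)
Definition position_weight x : nat := \sum_(z : 'I_N) z * x z.

Lemma position_weight_swap x (z z1 : 'I_N) : nat_of_ord z1 = z.+1 ->
  position_weight (tperm z z1 * x)%g + x z1 = position_weight x + x z.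
Proof.
move=> z1E; have zz1 : z1 != z by apply/eqP => e; move: z1E; rewrite e; lia.
rewrite /position_weight (bigD1 z) // [in RHS](bigD1 z) //=.
rewrite (bigD1 z1) ?zz1 //= [in RHS](bigD1 z1) ?zz1 //=.
rewrite [in X in X + _ = _](eq_bigr (fun u : 'I_N => u * x u)); last first.
  by move=> u /andP[uz uz1]; rewrite permM tpermD // eq_sym.
by rewrite !permM tpermL tpermR z1E !mulSn; lia.
Qed.

Lemma sort_window a b s : a <= b <= N ->
  exists2 t, t \in allowed (b - a) a set0 & ascending (t * s)%g a b.
Proof.
move=> /andP[ab bN].
have [t tW tmax] := @arg_maxnP _ 1%g (fun t => t \in allowed (b - a) a set0)
  (fun t => position_weight (t * s)%g) (group1 (allowed_group _ _ _)).
exists t => //; set x := (t * s)%g.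
have adjacent (z z1 : 'I_N) : nat_of_ord z1 = z.+1 -> a <= z -> z1 < b -> x z < x z1.
  move=> z1E az z1b; case: (ltngtP (x z) (x z1)) => // [desc|same]; last first.
    by move/val_inj/perm_inj: same => zz1; move: z1E; rewrite zz1; lia.
  have swapW : tperm z z1 \in allowed (b - a) a set0.
    apply: tperm_allowed; apply/and3P; rewrite /in_block; split; try lia.
    by apply/forallP => e; rewrite inE.
  (* swapping the descent would beat the maximal weight *)
  have := tmax _ (groupM swapW tW); rewrite /= -mulgA -/x.
  by rewrite leqNgt -(ltn_add2r (x z1)) position_weight_swap // ltn_add2l desc.
pose f n : nat := if insub n is Some z then x z else 0.
have fE (z : 'I_N) : f z = x z by rewrite /f valK.
have f_incr : {in [pred n | a <= n < b] &, {homo f : m n / m < n}}.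
  apply: homo_ltn_in => [y m n|m n + + k|n]; [exact: ltn_trans | rewrite !inE /=; lia |].
  rewrite !inE => /andP[an nb] /andP[_ n1b]; have nN : n < N by lia.
  have n1N : n.+1 < N by lia.
  by have := adjacent (Ordinal nN) (Ordinal n1N) erefl an n1b; rewrite -!fE.
by move=> z z' az zz' z'b; rewrite -!fE; apply: f_incr; rewrite ?inE //; lia.
Qed.

Lemma transposition_count_last x x' c (q p : 'I_N) Y :
  c <= q <= p -> ascending x c p.+1 -> ascending x' c p.+1 ->
  count_low x' c Y <= count_low x c Y -> count_low x' p.+1 Y <= count_low x p.+1 Y ->
  count_low (tperm q p * x')%g p Y <= count_low (tperm q p * x)%g p Y.
Proof.
move=> /andP[cq qp] asc asc' atC atP.
have := tperm_count_last x Y qp; have := tperm_count_last x' Y qp.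
have [x'low|x'high] := ltnP (x' q) Y; first by case: (x q < Y) => /=; lia.
have [xlow|xhigh] := ltnP (x q) Y; last by lia.
(* the moved card is low for x but high for x': by ascent, [c, q] is all low
   in x and [q, p] all high in x', which gives x the extra unit needed *)
have pN := ltn_ord p.
have x_low : count_in x c q.+1 Y = q.+1 - c.
  apply: count_in_full => [|z /andP[cz zq]]; first by lia.
  have [zq'|zq'|/val_inj->] // := ltngtP z q; last by lia.
  by apply: ltn_trans xlow; apply: asc => //; lia.
have x'_high : count_in x' q p.+1 Y = 0.
  apply: count_in_empty => z /andP[qz zp].
  have [qz'|qz'|/val_inj<-] // := ltngtP q z; last by lia.
  by apply: leq_trans x'high _; apply: ltnW; apply: asc' => //; lia.
have := @count_in_le _ x' c q Y (leq_trans qp (ltnW pN)).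
move: atC atP; rewrite /count_low.
have := @count_in_cat _ x 0 c p.+1 Y; have := @count_in_cat _ x c q.+1 p.+1 Y.
have := @count_in_cat _ x' 0 c p.+1 Y; have := @count_in_cat _ x' c q p.+1 Y.
have c0p : 0 <= c <= p.+1 by lia. have cqp : c <= q.+1 <= p.+1 by lia.
have cqp' : c <= q <= p.+1 by lia.
move=> /(_ cqp') + /(_ c0p) + /(_ cqp) + /(_ c0p); lia.
Qed.

Lemma transposition_dominates x x' c (q p : 'I_N) :
  c <= q <= p -> ascending x c p.+1 -> ascending x' c p.+1 ->
  (forall X Y, (X <= c) || (p.+1 <= X) -> count_low x' X Y <= count_low x X Y) ->
  forall X Y, (X <= c) || (p <= X) ->
  count_low (tperm q p * x')%g X Y <= count_low (tperm q p * x)%g X Y.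
Proof.
move=> cqp asc asc' outside X Y cpX.
have [Xp|pX|->] := ltngtP X p.
- by rewrite !tperm_count_low; [apply: outside | |]; lia.
- by rewrite !tperm_count_low; [apply: outside | |]; lia.
- apply: (transposition_count_last (c := c)) => //; apply: outside.
    by rewrite leqnn.
  by rewrite leqnn orbT.
Qed.

End SortingWindows.

Local Open Scope ring_scope.

Section OrbitAverages.
Variables (R : realFieldType) (N : nat).
Implicit Types (H K : {group {perm 'I_N}}) (f g : {perm 'I_N} -> R) (s : {perm 'I_N}).

Definition orbit_avg (H : {set {perm 'I_N}}) f s : R :=
  (\sum_(t in H) f (t * s)%g) / #|H|%:R.

Lemma card_group_neq0 H : #|H|%:R != 0 :> R.
Proof. by rewrite pnatr_eq0 -lt0n cardG_gt0. Qed.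

Lemma orbit_avg_invariant H f u s : u \in H -> orbit_avg H f (u * s)%g = orbit_avg H f s.
Proof.
move=> uH; rewrite /orbit_avg [in RHS](reindex_inj (mulIg u)) /=; congr (_ / _).
by apply: eq_big => [t|t _]; [rewrite groupMr | rewrite mulgA].
Qed.

Lemma orbit_avg_id H f s : (forall t, t \in H -> f (t * s)%g = f s) -> orbit_avg H f s = f s.
Proof.
move=> fix_s; rewrite /orbit_avg (eq_bigr (fun _ => f s)) // sumr_const.
by rewrite -[X in X / _]mulr_natr mulfK ?card_group_neq0.
Qed.

Lemma orbit_avg_sum H f : \sum_s orbit_avg H f s = \sum_s f s.
Proof.
rewrite /orbit_avg -mulr_suml exchange_big /=.
rewrite (eq_bigr (fun _ => \sum_s f s)); last first.
  by move=> t _; rewrite [in RHS](reindex_inj (mulgI t)).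
by rewrite sumr_const -[X in X / _]mulr_natr mulfK ?card_group_neq0.
Qed.

Lemma orbit_avg_adjoint H f g :
  \sum_s orbit_avg H f s * g s = \sum_s f s * orbit_avg H g s.
Proof.
rewrite /orbit_avg.
under eq_bigr do rewrite mulrAC mulr_suml.
under [RHS]eq_bigr do rewrite mulrA mulr_sumr.
rewrite -!mulr_suml; congr (_ * _).
rewrite exchange_big [RHS]exchange_big /= [RHS](reindex_inj invg_inj) /=.
rewrite [RHS](eq_bigl (fun t => t \in H)) => [|t]; last by rewrite groupV.
apply: eq_bigr => t tH; rewrite [RHS](reindex_inj (mulgI t)) /=.
by apply: eq_bigr => s _; rewrite mulgA mulVg mul1g.
Qed.

Lemma invariant_adjoint H f g : (forall t s, t \in H -> f (t * s)%g = f s) ->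
  \sum_s f s * orbit_avg H g s = \sum_s f s * g s.
Proof.
move=> f_inv; rewrite -orbit_avg_adjoint; apply: eq_bigr => s _.
by rewrite orbit_avg_id // => t; apply: f_inv.
Qed.

Lemma orbit_avg_sub K H f s : K \subset H -> orbit_avg H (orbit_avg K f) s = orbit_avg H f s.
Proof.
move=> KH; rewrite /orbit_avg -mulr_suml exchange_big /=.
rewrite (eq_bigr (fun u => \sum_(t in H) f (t * s)%g)); last first.
  move=> u /(subsetP KH) uH; rewrite [RHS](reindex_inj (mulgI u)) /=.
  by apply: eq_big => [t|t _]; [rewrite groupMl | rewrite mulgA].
by rewrite sumr_const -[X in X / _ / _]mulr_natr mulfK ?card_group_neq0.
Qed.

Lemma step_avg k i E (nu : {perm 'I_N} -> R) s :
  step k i E nu s = orbit_avg (allowed k i E) nu s.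
Proof.
rewrite /step /orbit_avg mulr_suml [RHS](reindex_inj invg_inj) /=.
rewrite [RHS](eq_bigl (fun t => t \in allowed_group k i E)) => [|t]; last by rewrite groupV.
apply: eq_bigr => t _; rewrite (eq_bigl (fun s' => s' == (t^-1 * s)%g)) ?big_pred1_eq //.
by move=> s'; apply/eqP/eqP => [<-|->]; rewrite ?mulKg ?mulKVg.
Qed.

Lemma orbit_avg0 i E f s : orbit_avg (allowed 0 i E) f s = f s.
Proof. by apply: (@orbit_avg_id (allowed_group 0 i E)) => t /allowed0 ->; rewrite mul1g. Qed.

Definition piece_of k i E (p : 'I_N) : {set 'I_N} := [set q | same_piece k i E q p].

Section Cosets.
Variables (len i : nat) (E : {set 'I_(N.-1)}) (p : 'I_N).
Hypothesis p_last : nat_of_ord p = (i + len)%N.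

Lemma sum_cosets (F : {perm 'I_N} -> R) :
  \sum_(t in allowed len.+1 i E) F t =
  \sum_(q in piece_of len.+1 i E p) \sum_(u in allowed len i E) F (u * tperm q p)%g.
Proof.
rewrite (partition_big (fun t : {perm 'I_N} => t p)
  (fun q => q \in piece_of len.+1 i E p)) /= => [|t]; last first.
  move=> /allowedP/(_ p); rewrite inE (_ : in_block len.+1 i p) //.
  by rewrite /in_block p_last; lia.
apply: eq_bigr => q; rewrite inE => qp; rewrite (reindex_inj (mulIg (tperm q p))) /=.
have qpH := tperm_allowed qp; apply: eq_bigl => u; apply/andP/idP => [[uH /eqP up]|uH].
  rewrite -[u]mulg1 -(tperm2 q p) mulgA; apply: (allowed_of_fixed p_last).
    by rewrite groupM.
  by rewrite permM up tpermL.
split; first by rewrite groupM // (subsetP (allowed_succ _ _ _)).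
by rewrite permM (allowed_fixes_last p_last uH) tpermR.
Qed.

Lemma orbit_avg_cosets f s :
  orbit_avg (allowed len.+1 i E) f s =
  (\sum_(q in piece_of len.+1 i E p) orbit_avg (allowed len i E) f (tperm q p * s)%g)
    / #|piece_of len.+1 i E p|%:R.
Proof.
have card_prod : #|allowed len.+1 i E|%:R =
    #|piece_of len.+1 i E p|%:R * #|allowed len i E|%:R :> R.
  have := sum_cosets (fun _ => 1); rewrite sumr_const.
  under eq_bigr do rewrite sumr_const; rewrite sumr_const => ->.
  by rewrite mulr_natl.
rewrite /orbit_avg sum_cosets card_prod -mulr_suml invfM mulrA [RHS]mulrAC.
by congr (_ * _ * _); apply: eq_bigr => q _; apply: eq_bigr => u _; rewrite mulgA.
Qed.

End Cosets.

Definition monotone f : Prop := forall s s', dominates s s' -> f s' <= f s.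

Lemma monotoneE f : monotone f <-> increasing f.
Proof. by split => f_mono s s' /perm_geE; apply: f_mono. Qed.

Lemma window_compare a b g (x x' : {perm 'I_N}) : (a <= b <= N)%N -> monotone g ->
  (forall t y, t \in allowed (b - a) a set0 -> g (t * y)%g = g y) ->
  (forall X Y, (X <= a) || (b <= X) -> count_low x' X Y <= count_low x X Y)%N ->
  g x' <= g x.
Proof.
move=> abN g_mono g_inv outside.
have [t tW asc] := sort_window x abN; have [t' t'W _] := sort_window x' abN.
rewrite -(g_inv t x tW) -(g_inv t' x' t'W); apply: g_mono.
apply: (dominates_of_ascending abN asc) => X Y Xab.
by rewrite !(window_count_low _ _ t'W, window_count_low _ _ tW) //; apply: outside.
Qed.

Lemma avg_monotone len i E f : monotone f -> monotone (orbit_avg (allowed len i E) f).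
Proof.
elim: len f => [|len IH] f f_mono.
  by move=> s s' ss'; rewrite !orbit_avg0; apply: f_mono.
have [Nlen|lenN] := leqP N (i + len); first by rewrite allowed_overflow //; apply: IH.
pose p := Ordinal lenN; have p_last : nat_of_ord p = (i + len)%N by [].
have [c pieceP] := piece_of_last E p_last.
have cp : (c <= p)%N by have := pieceP p; rewrite same_piece_refl // /in_block p_last; lia.
set g := orbit_avg (allowed len i E) f.
have g_inv t y : t \in allowed len i E -> g (t * y)%g = g y.
  exact: (@orbit_avg_invariant (allowed_group len i E)).
have piece_win : allowed (p.+1 - c) c set0 \subset allowed len.+1 i E.
  apply: window_sub => z w zP wP; apply: (@same_piece_trans _ _ _ _ z p w).
    by rewrite pieceP; lia.
  by rewrite same_piece_sym pieceP; lia.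
have inner_win : allowed (p - c) c set0 \subset allowed len i E.
  apply: window_sub => z w zP wP; rewrite -same_piece_succ; try lia.
  apply: (@same_piece_trans _ _ _ _ z p w); first by rewrite pieceP; lia.
  by rewrite same_piece_sym pieceP; lia.
(* sort the piece [c, p] in both configurations, then compare coset by coset *)
move=> s s' ss'; have cpN : (c <= p.+1 <= N)%N by rewrite ltn_ord andbT; lia.
have [t tW asc] := sort_window s cpN; have [t' t'W asc'] := sort_window s' cpN.
rewrite -(orbit_avg_invariant f s (subsetP piece_win _ tW)).
rewrite -(orbit_avg_invariant f s' (subsetP piece_win _ t'W)).
rewrite !(orbit_avg_cosets E p_last) ler_wpM2r ?invr_ge0 ?ler0n //.
apply: ler_sum => q; rewrite inE pieceP => cqp.
apply: (window_compare (a := c) (b := p)).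
- by rewrite cp ltnW.
- exact: IH.
- by move=> y u /(subsetP inner_win); apply: g_inv.
apply: transposition_dominates => // X Y Xcp.
by rewrite !(window_count_low _ _ tW, window_count_low _ _ t'W) //; apply: ss'.
Qed.

End OrbitAverages.

Lemma chebyshev_sum (R : realFieldType) (I : finType) (P : {set I}) (a b : I -> R) :
  (forall q q', q \in P -> q' \in P -> 0 <= (a q - a q') * (b q - b q')) ->
  (\sum_(q in P) a q) / #|P|%:R * (\sum_(q in P) b q) <= \sum_(q in P) a q * b q.
Proof.
move=> similar.
have [/eqP|P_gt0] := posnP #|P|; first by rewrite cards_eq0 => /eqP ->; rewrite !big_set0 !mul0r.
have double_sum : \sum_(q in P) \sum_(q' in P) (a q - a q') * (b q - b q') =
    (#|P|%:R * (\sum_(q in P) a q * b q) - (\sum_(q in P) a q) * (\sum_(q in P) b q)) *+ 2.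
  have inner q : \sum_(q' in P) (a q - a q') * (b q - b q') =
      #|P|%:R * (a q * b q) - a q * (\sum_(q' in P) b q') - b q * (\sum_(q' in P) a q')
      + \sum_(q' in P) a q' * b q'.
    rewrite (eq_bigr (fun q' => a q * b q - a q * b q' - b q * a q' + a q' * b q')); last first.
      by move=> q' _; rewrite mulrBl !mulrBr; ring.
    by rewrite !big_split /= !sumrN sumr_const -!mulr_sumr; ring.
  rewrite (eq_bigr _ (fun q _ => inner q)) !big_split /= !sumrN -!mulr_suml -mulr_sumr sumr_const.
  ring.
have : 0 <= \sum_(q in P) \sum_(q' in P) (a q - a q') * (b q - b q').
  by apply: sumr_ge0 => q qP; apply: sumr_ge0 => q' q'P; apply: similar.
rewrite double_sum pmulrn_lge0 // subr_ge0 => key.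
by rewrite mulrAC ler_pdivrMr ?ltr0n // [X in _ <= X]mulrC.
Qed.

Section Censoring.
Variables (R : realFieldType) (N : nat).
Implicit Types (f g u v w : {perm 'I_N} -> R) (s : {perm 'I_N}).

Section LastPosition.
Variables (len i : nat) (E : {set 'I_(N.-1)}) (p : 'I_N).
Hypothesis p_last : nat_of_ord p = (i + len)%N.

Lemma coset_order v s (q q' : 'I_N) : monotone v ->
  (forall t y, t \in allowed len i E -> v (t * y)%g = v y) ->
  q \in piece_of len.+1 i E p -> q' \in piece_of len.+1 i E p -> (s q < s q')%N ->
  v (tperm q p * s)%g <= v (tperm q' p * s)%g.
Proof.
rewrite !inE => v_mono v_inv qp q'p sqq'.
have qq' : q != q' by apply/eqP => qq'; move: sqq'; rewrite qq' ltnn.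
(* after moving the card of q to p, the card of q' sits at position z *)
set z := tperm q p q'.
have zp : same_piece len.+1 i E z p.
  rewrite /z; case: tpermP => [_|_|_ _] //; apply: same_piece_refl.
  by rewrite /in_block p_last; lia.
have z_lt_p : (z < p)%N.
  have z_neq_p : z != p by rewrite /z -{2}(tpermL q p) (inj_eq perm_inj) eq_sym.
  case/and3P: zp => zi _ _; move: zi z_neq_p; rewrite /in_block -(inj_eq val_inj) /= p_last.
  lia.
(* moving the card of q' to p differs from moving that of q and then
   swapping positions z and p by an element of the smaller group *)
set t := (tperm z p * tperm q p * tperm q' p)%g.
have tH : t \in allowed len i E.
  apply: (allowed_of_fixed p_last); first by rewrite !groupM ?tperm_allowed.
  by rewrite /t !permM tpermR /z tpermK tpermL.
have coset_move : (tperm z p * (tperm q p * s))%g = (t * (tperm q' p * s))%g.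
  by rewrite /t -!mulgA; congr (_ * (_ * _))%g; rewrite mulgA tperm2 mul1g.
rewrite -(v_inv t (tperm q' p * s)%g tH) -coset_move; apply: v_mono.
by apply: dominates_swap z_lt_p _; rewrite !permM tpermR /z tpermK.
Qed.

Lemma coset_chebyshev v w : monotone v -> monotone w ->
  (forall t y, t \in allowed len i E -> v (t * y)%g = v y) ->
  (forall t y, t \in allowed len i E -> w (t * y)%g = w y) ->
  \sum_s orbit_avg (allowed len.+1 i E) v s * w s <= \sum_s v s * w s.
Proof.
move=> v_mono w_mono v_inv w_inv.
set H1 := allowed len.+1 i E; set P := piece_of len.+1 i E p.
have sub01 : allowed len i E \subset H1 := allowed_succ len i E.
have Av_inv t y : t \in H1 -> orbit_avg H1 v (t * y)%g = orbit_avg H1 v y.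
  exact: (@orbit_avg_invariant _ _ (allowed_group len.+1 i E)).
rewrite -(orbit_avg_sum (allowed_group len.+1 i E) (fun s => orbit_avg H1 v s * w s)).
rewrite -(orbit_avg_sum (allowed_group len.+1 i E) (fun s => v s * w s)).
apply: ler_sum => s _ /=; rewrite !(orbit_avg_cosets E p_last) ler_wpM2r ?invr_ge0 ?ler0n //.
have Av_on_coset q : q \in P -> orbit_avg (allowed len i E)
    (fun y => orbit_avg H1 v y * w y) (tperm q p * s)%g = orbit_avg H1 v s * w (tperm q p * s)%g.
  move=> qP; have qpH : tperm q p \in H1 by apply: tperm_allowed; rewrite inE in qP.
  rewrite orbit_avg_id; first by rewrite Av_inv.
  by move=> t tH; have tH1 := subsetP sub01 t tH; rewrite Av_inv // w_inv.
have vw_on_coset q : orbit_avg (allowed len i E) (fun y => v y * w y) (tperm q p * s)%g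
    = v (tperm q p * s)%g * w (tperm q p * s)%g.
  by apply: orbit_avg_id => t tH; rewrite v_inv // w_inv.
have Av_cosets : orbit_avg H1 v s = (\sum_(q in P) v (tperm q p * s)%g) / #|P|%:R.
  rewrite (orbit_avg_cosets E p_last); congr (_ / _); apply: eq_bigr => q _.
  by apply: orbit_avg_id => t tH; rewrite v_inv.
rewrite (eq_bigr _ Av_on_coset) (eq_bigr _ (fun q _ => vw_on_coset q)) Av_cosets -mulr_sumr.
(* along the piece, v and w taken on the cosets are ordered like the labels *)
apply: chebyshev_sum => q q' qP q'P.
have [sqq'|sq'q|/val_inj/perm_inj->] := ltngtP (s q) (s q'); last by rewrite subrr mul0r.
- by apply: mulr_le0; rewrite subr_le0; apply: coset_order.
- by apply: mulr_ge0; rewrite subr_ge0; apply: coset_order.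
Qed.

End LastPosition.

Lemma avg_censoring len i E u w : monotone u -> monotone w ->
  \sum_s orbit_avg (allowed len i E) u s * w s <= \sum_s u s * w s.
Proof.
elim: len u w => [|len IH] u w u_mono w_mono; first by under eq_bigr do rewrite orbit_avg0.
have [Nlen|lenN] := leqP N (i + len); first by rewrite allowed_overflow //; apply: IH.
pose p := Ordinal lenN; have p_last : nat_of_ord p = (i + len)%N by [].
set v := orbit_avg (allowed len i E) u; set w' := orbit_avg (allowed len i E) w.
have v_inv t y : t \in allowed len i E -> v (t * y)%g = v y := orbit_avg_invariant _ _.
have w'_inv t y : t \in allowed len i E -> w' (t * y)%g = w' y := orbit_avg_invariant _ _.
have Av_inv t y : t \in allowed len i E ->
    orbit_avg (allowed len.+1 i E) v (t * y)%g = orbit_avg (allowed len.+1 i E) v y.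
  by move/(subsetP (allowed_succ len i E)); apply: orbit_avg_invariant.
(* reduce to the smaller group: replace u by v and w by its average w' *)
apply: le_trans (IH u w u_mono w_mono).
have Au_eq s : orbit_avg (allowed len.+1 i E) u s = orbit_avg (allowed len.+1 i E) v s.
  by rewrite /v orbit_avg_sub ?allowed_succ.
under eq_bigr do rewrite Au_eq.
rewrite -(invariant_adjoint w Av_inv) -(invariant_adjoint w v_inv).
by apply: (coset_chebyshev p_last) => //; apply: avg_monotone.
Qed.

Definition censoring_invariant (nuC nuU : {perm 'I_N} -> R) : Prop :=
  [/\ monotone nuC, monotone nuU &
      forall g, monotone g -> \sum_s nuU s * g s <= \sum_s nuC s * g s].

(* An update keeps the invariant: the uncensored one by (1) and adjointness,
   the censored one by (2), as averaging over the censored subgroup first does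
   not change the uncensored average. *)
Lemma censoring_invariant_step k i E nuC nuU : censoring_invariant nuC nuU ->
  censoring_invariant (step k i E nuC) (step k i set0 nuU).
Proof.
case=> C_mono U_mono CU_dom; have stepE := @step_avg R N.
split => [s s' ss'|s s' ss'|g g_mono]; rewrite ?stepE; first exact: avg_monotone.
  exact: avg_monotone.
under eq_bigr do rewrite stepE; under [X in _ <= X]eq_bigr do rewrite stepE.
rewrite (orbit_avg_adjoint (allowed_group k i set0)).
apply: le_trans (CU_dom _ (avg_monotone _ _ _ g_mono)) _.
rewrite -(orbit_avg_adjoint (allowed_group k i set0)).
have A0_eq s : orbit_avg (allowed_group k i set0) nuC s =
    orbit_avg (allowed_group k i set0) (orbit_avg (allowed_group k i E) nuC) s.
  by rewrite orbit_avg_sub ?allowed_uncensored.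
under [X in X <= _]eq_bigr do rewrite A0_eq.
by apply: avg_censoring => //; apply: avg_monotone.
Qed.

Lemma censoring_invariant_law k C (ups : seq (R * 'I_(N.+1 - k))) nuC nuU :
  censoring_invariant nuC nuU ->
  censoring_invariant (law C ups nuC) (law (@no_censoring R N) ups nuU).
Proof.
rewrite /law; elim: ups nuC nuU => [//|upd ups IH] nuC nuU inv /=.
by apply: IH; apply: censoring_invariant_step.
Qed.

Lemma stoch_dom_of_tests nuC nuU :
  (forall g, monotone g -> \sum_s nuU s * g s <= \sum_s nuC s * g s) -> stoch_dom nuC nuU.
Proof.
move=> tests A A_up; pose g s : R := (s \in A)%:R.
have sumA nu : \sum_(s in A) nu s = \sum_s nu s * g s.
  by rewrite big_mkcond; apply: eq_bigr => s _; rewrite /g; case: (s \in A); rewrite ?mulr1 ?mulr0.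
rewrite !sumA; apply: tests => s s' /perm_geE ss'; rewrite /g.
by case: (boolP (s' \in A)) => [/A_up/(_ ss') -> | _]; rewrite ?ler0n.
Qed.

Lemma density_increasing nu : increasing (fun s => nu s / muN R s) <-> monotone nu.
Proof.
have c_pos : 0 < (1 / (N`!)%:R : R)^-1 by rewrite invr_gt0 div1r invr_gt0 ltr0n fact_gt0.
rewrite -monotoneE /muN; split => nu_mono s s' ss'; last by rewrite ler_pM2r //; apply: nu_mono.
by rewrite -(ler_pM2r c_pos); apply: nu_mono.
Qed.

End Censoring.

Theorem lemma3p2 (R : realFieldType) (N k : nat) (nu0 : {perm 'I_N} -> R)
    (C : R -> {set 'I_(N.-1)}) (t : R) (ups : seq (R * 'I_(N.+1 - k))) :
  (3 <= k)%N ->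
  (forall s, 0 <= nu0 s) -> \sum_s nu0 s = 1 ->
  increasing (fun s => nu0 s / muN R s) ->
  cadlag C -> 0 <= t -> realization t ups ->
  increasing (fun s => law C ups nu0 s / muN R s) /\
  stoch_dom (law C ups nu0) (law (@no_censoring R N) ups nu0).
Proof.
move=> _ _ _ /density_increasing nu0_mono _ _ _.
have start : censoring_invariant nu0 nu0 by split => // g _; apply: lexx.
have [lawC_mono _ lawC_dom] := censoring_invariant_law C ups start.
by split; [apply/density_increasing | apply: stoch_dom_of_tests].
Qed.
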